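(* $c_2=1$, $c_3=c_4=\frac12$, $c_5=c_6=\frac25$, $c_7=\frac38$ and $c_8=\frac4{11}$.
   Context: A weighted digraph $D=(V,A,w)$ is a digraph without loops or parallel arcs (opposite arcs allowed) with weights $w:A\to\mathbb{R}_{\ge0}$; $w(D)$ is the total arc weight. For a partition $(X,Y)$ of $V$, $w(X,Y)$ is the total weight of arcs from $X$ to $Y$, and $\mathrm{mac}(D)=\max_{(X,Y)}w(X,Y)$. For an integer $\nu\ge1$, $c_\nu$ is the supremum of reals $c\ge0$ such that every acyclic weighted digraph $D$ whose longest directed path has exactly $\nu$ vertices satisfies $\mathrm{mac}(D)\ge c\cdot w(D)$. *)

From HB Require Import structures.
From mathcomp Require Import all_boot all_order all_algebra.
From mathcomp Require Import reals.
Set Implicit Arguments. Unset Strict Implicit. Unset Printing Implicit Defensive.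
Import Order.TTheory GRing.Theory Num.Theory.
Local Open Scope ring_scope.

(* A weighted digraph on vertex set 'I_n: arc relation A (no loops; a relation,
   so no parallel arcs; opposite arcs allowed) and weights w, nonnegative on arcs.
   Only the values of w on arcs matter. *)
Definition loopless (n : nat) (A : rel 'I_n) : Prop := forall i, ~~ A i i.

Definition nonneg_weights (R : realType) (n : nat) (A : rel 'I_n)
  (w : 'I_n -> 'I_n -> R) : Prop := forall i j, A i j -> 0 <= w i j.

Definition acyclic (n : nat) (A : rel 'I_n) : Prop :=
  forall (x : 'I_n) (p : seq 'I_n), path A x p -> p != [::] -> last x p != x.

(* directed path x :: p (no repeated vertices); it has (size p).+1 vertices *)
Definition dipath (n : nat) (A : rel 'I_n) (x : 'I_n) (p : seq 'I_n) : bool :=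
  path A x p && uniq (x :: p).

Definition longest_path_vertices (n : nat) (A : rel 'I_n) (nu : nat) : Prop :=
  (exists (x : 'I_n) (p : seq 'I_n), dipath A x p /\ size (x :: p) = nu) /\
  (forall (x : 'I_n) (p : seq 'I_n), dipath A x p -> (size (x :: p) <= nu)%N).

Definition wtot (R : realType) (n : nat) (A : rel 'I_n) (w : 'I_n -> 'I_n -> R) : R :=
  \sum_(i : 'I_n) \sum_(j : 'I_n | A i j) w i j.

Definition wcut (R : realType) (n : nat) (A : rel 'I_n) (w : 'I_n -> 'I_n -> R)
  (X : {set 'I_n}) : R :=
  \sum_(i in X) \sum_(j in ~: X | A i j) w i j.

(* mac(D) = max over partitions (X, V \ X) of w(X, V \ X) (all cuts are >= 0) *)
Definition mac (R : realType) (n : nat) (A : rel 'I_n) (w : 'I_n -> 'I_n -> R) : R :=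
  \big[Num.max/0]_(X : {set 'I_n}) wcut A w X.

Definition good_constants (R : realType) (nu : nat) : R -> Prop :=
  fun c => 0 <= c /\
    forall (n : nat) (A : rel 'I_n) (w : 'I_n -> 'I_n -> R),
      loopless A -> nonneg_weights A w -> acyclic A ->
      longest_path_vertices A nu ->
      c * wtot A w <= mac A w.

Definition is_sup (R : realType) (S : R -> Prop) (v : R) : Prop :=
  (forall c, S c -> c <= v) /\ (forall b, (forall c, S c -> c <= b) -> v <= b).

Definition c_nu_is (R : realType) (nu : nat) (v : R) : Prop :=
  is_sup (good_constants (R:=R) nu) v.

From HB Require Import structures.
From mathcomp Require Import all_boot all_order all_algebra.
From mathcomp Require Import reals.
From mathcomp Require Import lra.
Import Order.TTheory GRing.Theory Num.Theory.
Local Open Scope ring_scope.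
Set Implicit Arguments. Unset Strict Implicit. Unset Printing Implicit Defensive.

(* If every directed path of an acyclic digraph D has at most
   nu vertices, then D has a level function f : V -> {0, ..., nu-1} that
   strictly increases along arcs (the height of a vertex, i.e. the length of
   a longest walk ending in it).  Every set L of levels gives a cut
   X_L = f^-1(L), and an arc with levels a < b crosses X_L iff a \in L and
   b \notin L.  Hence, if a family of level sets with total multiplicity m
   separates every pair a < b < nu at least k times, averaging these m cuts
   gives mac(D) >= (k/m) w(D), i.e. k/m is an admissible constant.

   A weighted transitive tournament on nu vertices (arcs
   i -> j for all i < j) is acyclic with longest path of exactly nu vertices;
   if all its 2^nu cuts weigh at most num/den of its total weight, then no
   constant larger than num/den is admissible.

   Both certificates are finite objects checked by computation; for each nu
   they meet at the claimed value of c_nu. *)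

Lemma acyclic_walk_uniq (n : nat) (A : rel 'I_n) (x : 'I_n) (p : seq 'I_n) :
  acyclic A -> path A x p -> uniq (x :: p).
Proof.
move=> hac; elim: p x => [|y q IH] x //= /andP[Axy pq].
have /= -> := IH y pq; rewrite andbT; apply/negP => xin.
have : path A x (y :: q) by rewrite /= Axy.
case/splitPr: xin => p1 p2; rewrite cat_path /= => /and3P[h1 h2 _].
have hcyc : path A x (rcons p1 x) by rewrite rcons_path h1.
move: (hac x (rcons p1 x) hcyc); rewrite last_rcons eqxx.
by case: p1 {h1 h2 hcyc} => [|? ?] /(_ isT).
Qed.

Section Heights.
Variables (n : nat) (A : rel 'I_n).

(* One round of longest-walk relaxation: a vertex gets one more than the
   best value among its in-neighbours (0 if it has none). *)
Definition raise (g : 'I_n -> nat) (v : 'I_n) : nat :=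
  (\max_(u | A u v) (g u).+1)%N.

(* height k v: length of a longest walk of length at most k ending at v. *)
Definition height (k : nat) : 'I_n -> nat := iter k raise (fun=> 0%N).

Lemma raise_cases (g : 'I_n -> nat) (v : 'I_n) :
  raise g v = 0%N \/ exists2 u, A u v & raise g v = (g u).+1.
Proof.
case: (pickP (A^~ v)) => [u Auv|none]; last by left; rewrite /raise big_pred0.
right; rewrite /raise; have : (0 < #|A^~ v|)%N by apply/card_gt0P; exists u.
by case/(eq_bigmax_cond (fun u => (g u).+1)) => u0 ? ->; exists u0.
Qed.

Lemma raise_ge (g : 'I_n -> nat) (u v : 'I_n) : A u v -> ((g u).+1 <= raise g v)%N.
Proof. exact: (@leq_bigmax_cond _ (A^~ v) (fun u => (g u).+1) u). Qed.

Lemma heightS (k : nat) : height k.+1 = raise (height k).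
Proof. by []. Qed.

Lemma height_le (k : nat) (v : 'I_n) : (height k v <= k)%N.
Proof.
elim: k v => [|k IH] v //; rewrite heightS.
by apply/bigmax_leqP => u _; rewrite ltnS.
Qed.

Lemma height_mono (k : nat) (v : 'I_n) : (height k v <= height k.+1 v)%N.
Proof.
elim: k v => [|k IH] v //; rewrite !heightS.
by apply/bigmax_leqP => u Auv; apply: leq_trans (raise_ge _ Auv); rewrite ltnS.
Qed.

Lemma height_walk (k : nat) (v : 'I_n) :
  exists x p, [/\ path A x p, last x p = v & size p = height k v].
Proof.
elim: k v => [|k IH] v; first by exists v, [::].
rewrite heightS; case: (raise_cases (height k) v) => [->|[u Auv ->]].
  by exists v, [::].
have [x [p [hp hl hs]]] := IH u.
by exists x, (rcons p v); rewrite rcons_path last_rcons size_rcons hp hl hs.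
Qed.

(* Heights only ever change by jumping to the current round number: a vertex
   whose height still grows at round k+1 is the end of a walk of length k+1. *)
Lemma height_jump (k : nat) (v : 'I_n) :
  height k.+1 v != height k v -> height k.+1 v = k.+1.
Proof.
elim: k v => [|k IH] v grows.
  by apply/eqP; rewrite eqn_leq height_le lt0n.
have : (height k.+1 v < height k.+2 v)%N.
  by rewrite ltn_neqAle eq_sym grows height_mono.
rewrite [height k.+2]heightS.
case: (raise_cases (height k.+1) v) => [->|[u Auv ->]]; first by rewrite ltn0.
rewrite ltnS => le_u; case: (eqVneq (height k.+1 u) (height k u)) => [same|/IH -> //].
by move: (raise_ge (height k) Auv); rewrite -heightS -same ltnNge le_u.
Qed.

Variable nu : nat.
Hypothesis acA : acyclic A.
Hypothesis pathsA : forall x p, dipath A x p -> (size (x :: p) <= nu)%N.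

Lemma height_lt (k : nat) (v : 'I_n) : (height k v < nu)%N.
Proof.
have [x [p [hp _ <-]]] := height_walk k v.
have xp_path : dipath A x p by rewrite /dipath hp (acyclic_walk_uniq acA hp).
exact: pathsA xp_path.
Qed.

(* The heights stabilise after nu rounds and then increase along arcs. *)
Lemma level_function :
  exists f : 'I_n -> nat,
    (forall v, f v < nu)%N /\ (forall u v, A u v -> f u < f v)%N.
Proof.
have stable v : height nu.+1 v = height nu v.
  apply/eqP; apply/contraT => /height_jump jump.
  by have := height_lt nu.+1 v; rewrite jump ltnNge leqnSn.
exists (height nu); split => [v|u v Auv]; first exact: height_lt.
by rewrite -(stable v) heightS; apply: raise_ge Auv.
Qed.

End Heights.

Section Cuts.
Variables (R : realType) (n : nat) (A : rel 'I_n) (w : 'I_n -> 'I_n -> R).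

Lemma wcutE (X : {set 'I_n}) :
  wcut A w X = \sum_i \sum_(j | A i j) w i j * ((i \in X) && (j \notin X))%:R.
Proof.
rewrite /wcut big_mkcond; apply: eq_bigr => i _.
case: (boolP (i \in X)) => iX /=; last by rewrite big1 // => j _; rewrite mulr0.
rewrite big_mkcond [RHS]big_mkcond; apply: eq_bigr => j _.
by rewrite in_setC; case: (j \in X); case: (A i j); rewrite ?mulr1 ?mulr0.
Qed.

Lemma wcut_le_mac (X : {set 'I_n}) : wcut A w X <= mac A w.
Proof. by rewrite /mac (bigD1 X) //= le_max lexx. Qed.

Lemma mac_le (a b : R) :
  0 <= b -> (forall X, a * wcut A w X <= b) -> a * mac A w <= b.
Proof.
move=> b_ge0 cut_le; rewrite /mac; elim/big_ind: _ => [|x y|X _] //.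
  by rewrite mulr0.
by case: (leP x y).
Qed.

Lemma wtot_ge0 : nonneg_weights A w -> 0 <= wtot A w.
Proof. by move=> hw; apply: sumr_ge0 => i _; apply: sumr_ge0 => j; apply: hw. Qed.

End Cuts.

(* A weighted family of level sets: pairs (L, multiplicity). *)
Definition level_family := seq (seq nat * nat).

Definition multiplicity (S : level_family) : nat := sumn (map snd S).

Definition separation (S : level_family) (a b : nat) : nat :=
  sumn [seq (d.2 * ((a \in d.1) && (b \notin d.1)))%N | d <- S].

Section LevelCuts.
Variables (R : realType) (n : nat) (A : rel 'I_n) (w : 'I_n -> 'I_n -> R).
Variable f : 'I_n -> nat.

Definition level_cut (L : seq nat) : {set 'I_n} := [set v | f v \in L].

Lemma sum_level_cuts (S : level_family) :
  \sum_(d <- S) d.2%:R * wcut A w (level_cut d.1) =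
  \sum_i \sum_(j | A i j) w i j * (separation S (f i) (f j))%:R.
Proof.
elim: S => [|d S IH].
  by rewrite big_nil; symmetry; apply: big1 => i _; apply: big1 => j _; rewrite mulr0.
rewrite big_cons IH wcutE mulr_sumr -big_split; apply: eq_bigr => i _.
rewrite mulr_sumr -big_split; apply: eq_bigr => j _.
by rewrite /separation /= natrD mulrDr natrM mulrCA !inE.
Qed.

Lemma sum_level_cuts_le (S : level_family) :
  \sum_(d <- S) d.2%:R * wcut A w (level_cut d.1) <= (multiplicity S)%:R * mac A w.
Proof.
elim: S => [|d S IH]; first by rewrite big_nil mul0r.
rewrite big_cons /multiplicity /= natrD mulrDl; apply: lerD => //.
by apply: ler_wpM2l => //; apply: wcut_le_mac.
Qed.

End LevelCuts.

Lemma level_family_bound (R : realType) (nu : nat) (S : level_family) (k : nat) (c : R) :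
  (forall a b, (a < b < nu)%N -> (k <= separation S a b)%N) ->
  (0 < multiplicity S)%N -> 0 <= c -> c * (multiplicity S)%:R <= k%:R ->
  good_constants nu c.
Proof.
move=> separated m_gt0 c_ge0 ck; split => // n A w _ hw hac [_ hlong].
have [f [f_lt f_incr]] := level_function hac hlong.
have lower : k%:R * wtot A w <= (multiplicity S)%:R * mac A w.
  apply: (le_trans _ (sum_level_cuts_le A w f S)); rewrite sum_level_cuts.
  rewrite /wtot mulr_sumr; apply: ler_sum => i _; rewrite mulr_sumr.
  apply: ler_sum => j Aij; rewrite mulrC ler_wpM2l ?hw // ler_nat separated //.
  by rewrite f_incr ?f_lt.
have m_pos : 0 < (multiplicity S)%:R :> R by rewrite ltr0n.
rewrite -(ler_pM2l m_pos); apply: (le_trans _ lower).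
by rewrite mulrA [_ * c]mulrC; exact: (ler_wpM2r (wtot_ge0 hw) ck).
Qed.

Definition level_check (nu : nat) (S : level_family) (k : nat) : bool :=
  all (fun a => all (fun b => (a < b) ==> (k <= separation S a b))%N (iota 0 nu))
    (iota 0 nu).

Lemma level_checkP (nu : nat) (S : level_family) (k : nat) :
  level_check nu S k -> forall a b, (a < b < nu)%N -> (k <= separation S a b)%N.
Proof.
move=> /allP check a b /andP[ab b_lt].
have a_lt := ltn_trans ab b_lt.
move: check => /(_ a); rewrite mem_iota a_lt => /(_ isT) /allP /(_ b).
by rewrite mem_iota b_lt ab => /(_ isT).
Qed.

Definition tournament (nu : nat) : rel 'I_nu := fun i j => (i < j)%N.
Arguments tournament : clear implicits.

Lemma tournament_loopless (nu : nat) : loopless (tournament nu).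
Proof. by move=> i; rewrite /tournament ltnn. Qed.

Lemma tournament_acyclic (nu : nat) : acyclic (tournament nu).
Proof.
move=> x p; have tr : transitive (tournament nu) by move=> ? ? ?; apply: ltn_trans.
rewrite (path_sortedE tr) => /andP[/allP after_x _] p_nil.
have : last x p \in p by case: p p_nil {after_x} => // y q _; exact: mem_last y q.
by move/after_x; apply: contraTneq => ->; rewrite /tournament ltnn.
Qed.

(* Its vertices in increasing order form a path; no path can be longer. *)
Lemma tournament_longest (nu : nat) : longest_path_vertices (tournament nu.+1) nu.+1.
Proof.
split; last first.
  move=> x p /andP[_ /card_uniqP <-].
  by rewrite -[X in (_ <= X)%N](card_ord nu.+1) max_card.
have vals := val_enum_ord nu.+1; have uniq_all := enum_uniq 'I_nu.+1.
case: (enum 'I_nu.+1) vals uniq_all => [//|x p] [x0 p_vals] uniq_xp.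
exists x, p; split; last by rewrite /= -(size_map val) p_vals size_iota.
rewrite /dipath uniq_xp andbT -(@path_map _ _ (@nat_of_ord _) ltn) x0 p_vals.
exact: (iota_ltn_sorted 0 nu.+1).
Qed.

(* All boolean sequences of length k, i.e. all vertex subsets of 'I_k. *)
Fixpoint bitvecs (k : nat) : seq (seq bool) :=
  if k is k'.+1 then [seq x :: b | x <- [:: true; false], b <- bitvecs k']
  else [:: [::]].

Lemma bitvecsP (k : nat) (b : seq bool) : size b = k -> b \in bitvecs k.
Proof.
elim: k b => [|k IH] [|x b] //= [/IH b_in].
by case: x; rewrite /= !mem_cat (map_f _ b_in) ?orbT.
Qed.

(* A double sum over {0, ..., nu-1}^2 written with sequences, so that it
   evaluates by computation. *)
Definition grid_sum (nu : nat) (G : nat -> nat -> nat) : nat :=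
  sumn [seq sumn [seq G i j | j <- iota 0 nu] | i <- iota 0 nu].

Lemma grid_sumE (R : realType) (nu : nat) (G : nat -> nat -> nat) :
  \sum_(i < nu) \sum_(j < nu) (G i j)%:R = (grid_sum nu G)%:R :> R.
Proof.
have sum_iota (F : nat -> nat) : (\sum_(i < nu) F i)%N = sumn [seq F i | i <- iota 0 nu].
  by rewrite sumnE big_map -(big_mkord xpredT) /index_iota subn0.
rewrite /grid_sum -sum_iota natr_sum; apply: eq_bigr => i _.
by rewrite -sum_iota natr_sum.
Qed.

Section WeightedTournament.
Variables (R : realType) (nu : nat) (W : nat -> nat -> nat).

Definition tt_weight (i j : 'I_nu) : R := (W i j)%:R.

Definition tt_total : nat := grid_sum nu (fun i j => W i j * (i < j))%N.

(* Weight of the cut given by the characteristic sequence b of a vertex set. *)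
Definition tt_cut (b : seq bool) : nat :=
  grid_sum nu (fun i j => W i j * (i < j) * (nth false b i && ~~ nth false b j))%N.

Lemma tt_wtot : wtot (tournament nu) tt_weight = tt_total%:R.
Proof.
rewrite /tt_total -grid_sumE; apply: eq_bigr => i _.
rewrite big_mkcond; apply: eq_bigr => j _.
by rewrite /tournament /tt_weight; case: (i < j)%N; rewrite ?muln1 ?muln0.
Qed.

Lemma tt_wcut (X : {set 'I_nu}) :
  wcut (tournament nu) tt_weight X = (tt_cut [seq x \in X | x <- enum 'I_nu])%:R.
Proof.
have bitsE (i : 'I_nu) : nth false [seq x \in X | x <- enum 'I_nu] i = (i \in X).
  by rewrite (nth_map i) ?size_enum_ord // nth_ord_enum.
rewrite wcutE /tt_cut -grid_sumE; apply: eq_bigr => i _.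
rewrite big_mkcond; apply: eq_bigr => j _; rewrite /tournament /tt_weight !bitsE.
by case: (i < j)%N; rewrite ?muln1 ?muln0 ?mul0n ?natrM ?mul0r.
Qed.

Definition tournament_check (num den : nat) : bool :=
  (0 < tt_total)%N &&
  all (fun b => den * tt_cut b <= num * tt_total)%N (bitvecs nu).

End WeightedTournament.

Lemma tournament_bound (R : realType) (nu : nat) (W : nat -> nat -> nat)
    (num den : nat) (c : R) :
  tournament_check nu.+1 W num den -> good_constants nu.+1 c -> c * den%:R <= num%:R.
Proof.
case/andP => tot_pos /allP cuts_small [_ good].
have tot_posR : 0 < wtot (tournament nu.+1) (tt_weight R W).
  by rewrite tt_wtot ltr0n.
have mac_small :
    den%:R * mac (tournament nu.+1) (tt_weight R W) <=
    num%:R * wtot (tournament nu.+1) (tt_weight R W).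
  apply: mac_le => [|X]; first by rewrite tt_wtot -natrM ler0n.
  rewrite tt_wcut tt_wtot -!natrM ler_nat; apply: cuts_small; apply: bitvecsP.
  by rewrite size_map size_enum_ord.
have c_le := good _ _ (tt_weight R W) (@tournament_loopless _) (fun _ _ _ => ler0n _ _)
  (@tournament_acyclic _) (@tournament_longest nu).
rewrite -(ler_pM2r tot_posR); apply: le_trans mac_small.
by rewrite mulrAC mulrC; apply: ler_wpM2l c_le.
Qed.

(* Arc weights of a tournament, listed as triples (i, j, weight). *)
Definition weights_of (T : seq (nat * nat * nat)) (i j : nat) : nat :=
  sumn [seq t.2 | t <- T & t.1 == (i, j)].

Lemma c_nu_certified (R : realType) (nu : nat) (S : level_family) (k m : nat)
    (T : seq (nat * nat * nat)) (num den : nat) (v : R) :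
  level_check nu.+1 S k -> multiplicity S = m ->
  tournament_check nu.+1 (weights_of T) num den ->
  (0 < m)%N -> (0 < den)%N -> v * m%:R = k%:R -> v * den%:R = num%:R ->
  c_nu_is nu.+1 v.
Proof.
move=> lc mS tc m_pos den_pos vk vnum.
have v_ge0 : 0 <= v by rewrite -(pmulr_lge0 _ (_ : 0 < m%:R)) ?ltr0n // vk ler0n.
split => [c /(tournament_bound tc)|b upper].
  by rewrite -vnum ler_pM2r // ltr0n.
apply: upper; apply: (level_family_bound (level_checkP lc));
  by rewrite ?mS ?vk.
Qed.

(* The certificates: for each nu, a level family (level set, multiplicity)
   and a weighted tournament (arc i -> j, weight), both meeting at c_nu. *)
Section Values.
Variable R : realType.

Lemma c2_value : c_nu_is (R:=R) 2 1.
Proof.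
by apply: (@c_nu_certified R 1 [:: ([:: 0], 1)]%N 1 1 [:: (0, 1, 1)]%N 1 1);
  [vm_compute.. | lra | lra].
Qed.

(* Two level sets separating each pair at least once; a directed path of two arcs. *)
Lemma c3_value : c_nu_is (R:=R) 3 (1/2).
Proof.
by apply: (@c_nu_certified R 2 [:: ([:: 0], 1); ([:: 1], 1)]%N 1 2
          [:: (0, 1, 1); (1, 2, 1)]%N 1 2);
  [vm_compute.. | lra | lra].
Qed.

(* Two level sets separating each pair at least once; a path of two arcs behind an
   isolated start vertex. *)
Lemma c4_value : c_nu_is (R:=R) 4 (1/2).
Proof.
by apply: (@c_nu_certified R 3 [:: ([:: 0; 1], 1); ([:: 0; 2], 1)]%N 1 2
          [:: (1, 2, 1); (2, 3, 1)]%N 1 2);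
  [vm_compute.. | lra | lra].
Qed.

(* Five level sets separating each pair at least twice; five unit arcs, every cut
   of which carries at most two. *)
Lemma c5_value : c_nu_is (R:=R) 5 (2/5).
Proof.
by apply: (@c_nu_certified R 4
          [:: ([:: 0; 1], 1); ([:: 0; 2], 1); ([:: 0; 3], 1); ([:: 1; 2], 1);
              ([:: 1; 3], 1)]%N 2 5
          [:: (0, 1, 1); (1, 2, 1); (1, 3, 1); (2, 3, 1); (3, 4, 1)]%N 2 5);
  [vm_compute.. | lra | lra].
Qed.

(* Five level sets separating each pair at least twice; five unit arcs, every cut
   of which carries at most two. *)
Lemma c6_value : c_nu_is (R:=R) 6 (2/5).
Proof.
by apply: (@c_nu_certified R 5
          [:: ([:: 1; 2], 1); ([:: 0; 1; 3], 1); ([:: 0; 1; 4], 1);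
              ([:: 0; 2; 3], 1); ([:: 0; 2; 4], 1)]%N 2 5
          [:: (1, 2, 1); (2, 3, 1); (2, 4, 1); (3, 4, 1); (4, 5, 1)]%N 2 5);
  [vm_compute.. | lra | lra].
Qed.

(* Eight level sets separating each pair at least three times; a tournament of total
   weight 16 whose cuts carry at most 6. *)
Lemma c7_value : c_nu_is (R:=R) 7 (3/8).
Proof.
by apply: (@c_nu_certified R 6
          [:: ([:: 0; 1; 3], 1); ([:: 0; 1; 4], 1); ([:: 0; 2; 3], 1);
              ([:: 0; 2; 5], 1); ([:: 1; 2; 4], 1); ([:: 0; 1; 2; 5], 1);
              ([:: 0; 1; 3; 5], 1); ([:: 0; 2; 3; 4], 1)]%N 3 8
          [:: (0, 1, 2); (0, 2, 1); (1, 2, 1); (1, 3, 1); (1, 4, 1); (1, 5, 1);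
              (2, 3, 1); (2, 4, 1); (2, 5, 1); (3, 4, 1); (3, 5, 1); (4, 5, 2);
              (5, 6, 2)]%N 3 8);
  [vm_compute.. | lra | lra].
Qed.

(* Level sets of total multiplicity 22 separating each pair at least eight times; a
   tournament of total weight 33 whose cuts carry at most 12. *)
Lemma c8_value : c_nu_is (R:=R) 8 (4/11).
Proof.
by apply: (@c_nu_certified R 7
          [:: ([:: 0; 2; 4], 2); ([:: 0; 3; 4], 1); ([:: 1; 2; 5], 2);
              ([:: 1; 3; 5], 1); ([:: 0; 1; 2; 6], 2); ([:: 0; 1; 3; 4], 2);
              ([:: 0; 1; 3; 5], 1); ([:: 0; 1; 3; 6], 2); ([:: 0; 1; 4; 5], 1);
              ([:: 0; 1; 4; 6], 1); ([:: 0; 2; 3; 4], 1); ([:: 0; 2; 3; 5], 2);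
              ([:: 0; 2; 3; 6], 2); ([:: 0; 1; 2; 4; 5], 1);
              ([:: 0; 1; 2; 4; 6], 1)]%N 8 22
          [:: (0, 1, 2); (1, 2, 2); (1, 3, 2); (1, 4, 2); (2, 3, 2); (2, 4, 2);
              (3, 4, 3); (3, 5, 1); (3, 6, 1); (4, 5, 4); (4, 6, 4); (5, 6, 4);
              (6, 7, 4)]%N 4 11);
  [vm_compute.. | lra | lra].
Qed.

End Values.

Theorem theoremA (R : realType) :
  c_nu_is (R:=R) 2 1 /\
  c_nu_is (R:=R) 3 (1/2) /\ c_nu_is (R:=R) 4 (1/2) /\
  c_nu_is (R:=R) 5 (2/5) /\ c_nu_is (R:=R) 6 (2/5) /\
  c_nu_is (R:=R) 7 (3/8) /\ c_nu_is (R:=R) 8 (4/11).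
Proof.
exact: (conj (c2_value R) (conj (c3_value R) (conj (c4_value R)
         (conj (c5_value R) (conj (c6_value R) (conj (c7_value R) (c8_value R))))))).
Qed.
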